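(* Let $P$ be a simple orthogonal polygon. If $u$ is an NE-reflex vertex and $v$ is an SW-reflex vertex of $P$ with $v.x\ge u.x$ and $v.y\ge u.y$, then $\{0^\circ,90^\circ\}$-Kernel$_\theta(P)=\emptyset$ for every $\theta\in(0,\frac{\pi}{2})$. Similarly, if $u'$ is an NW-reflex vertex and $v'$ is an SE-reflex vertex of $P$ with $v'.x\le u'.x$ and $v'.y\ge u'.y$, then $\{0^\circ,90^\circ\}$-Kernel$_\theta(P)=\emptyset$ for every $\theta\in(0,\frac{\pi}{2})$.
   Context: An orthogonal polygon is a polygon all of whose edges are horizontal or vertical. An edge is an N-edge (resp. S-, E-, W-edge) if it bounds the polygon from the north (resp. south, east, west), i.e. the interior of $P$ lies immediately below (resp. above, to the left, to the right) of it. A reflex vertex is an NE-reflex vertex if it is incident to an N-edge and an E-edge; NW-, SE-, SW-reflex vertices are defined analogously. For a vertex $w$, $w.x$ and $w.y$ are its coordinates. For an angle $\beta$, a curve is $\beta$-convex if its intersection with every line forming counterclockwise angle $\beta$ with the positive $x$-axis is connected. For $\theta\in[0,\pi/2)$, two points $p,q\in P$ see each other with respect to $\{0^\circ,90^\circ\}$ rotated by $\theta$ if some curve contained in $P$ connecting them is both $\theta$-convex and $(\theta+90^\circ)$-convex; $\{0^\circ,90^\circ\}$-Kernel$_\theta(P)$ is the set of points of $P$ that see every point of $P$ in this sense. *)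

From HB Require Import structures.
From mathcomp Require Import all_boot all_order all_algebra.
From mathcomp Require Import all_classical all_reals all_analysis.
Set Implicit Arguments. Unset Strict Implicit. Unset Printing Implicit Defensive.
Import Order.TTheory GRing.Theory Num.Theory.
Import numFieldNormedType.Exports.
Local Open Scope classical_set_scope.
Local Open Scope ring_scope.

Section Polygon.
Variable R : realType.
Notation pt := (R * R)%type.

(* A polygon is given by its cyclic list of vertices v_0, ..., v_{n-1};
   edges are the segments [v_i, v_{i+1}] (indices mod n). *)
Definition vtx (s : seq pt) (i : nat) : pt := nth (0, 0) s (i %% size s)%N.

Definition seg (a b : pt) : set pt :=
  [set p | exists t : R, 0 <= t <= 1 /\
     p = (a.1 + t * (b.1 - a.1), a.2 + t * (b.2 - a.2))].

Definition oseg (a b : pt) : set pt :=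
  [set p | exists t : R, 0 < t < 1 /\
     p = (a.1 + t * (b.1 - a.1), a.2 + t * (b.2 - a.2))].

Definition edge (s : seq pt) (i : nat) : set pt := seg (vtx s i) (vtx s i.+1).

Definition horizontal (a b : pt) : Prop := a.2 = b.2 /\ a.1 <> b.1.
Definition vertical (a b : pt) : Prop := a.1 = b.1 /\ a.2 <> b.2.

(* orthogonal polygon: every edge is horizontal or vertical, and
   consecutive edges alternate (no degenerate or collinear vertices) *)
Definition orthogonal_polygon (s : seq pt) : Prop :=
  (4 <= size s)%N /\
  forall i, (i < size s)%N ->
    (horizontal (vtx s i) (vtx s i.+1) /\ vertical (vtx s i.+1) (vtx s i.+2)) \/
    (vertical (vtx s i) (vtx s i.+1) /\ horizontal (vtx s i.+1) (vtx s i.+2)).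

Definition simple_polygon (s : seq pt) : Prop :=
  forall i j, (i < size s)%N -> (j < size s)%N -> i <> j ->
    (j = (i.+1 %% size s)%N -> edge s i `&` edge s j = [set vtx s i.+1]) /\
    (j <> (i.+1 %% size s)%N -> i <> (j.+1 %% size s)%N -> edge s i `&` edge s j = set0).

Definition simple_orthogonal_polygon (s : seq pt) : Prop :=
  orthogonal_polygon s /\ simple_polygon s.

Definition boundary (s : seq pt) : set pt :=
  [set p | exists i, (i < size s)%N /\ edge s i p].

Definition bounded_set2 (A : set pt) : Prop :=
  exists M : R, forall p, A p -> `|p.1| <= M /\ `|p.2| <= M.

(* interior: the points off the boundary whose component in the complement
   of the boundary is bounded (Jordan curve theorem) *)
Definition pinterior (s : seq pt) : set pt :=
  [set p | ~ boundary s p /\ bounded_set2 (connected_component (~` boundary s) p)].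

(* the polygon P as a closed region *)
Definition region (s : seq pt) : set pt := boundary s `|` pinterior s.

Definition N_edge (s : seq pt) (i : nat) : Prop :=
  horizontal (vtx s i) (vtx s i.+1) /\
  forall p, oseg (vtx s i) (vtx s i.+1) p -> exists2 e : R, 0 < e &
    forall t : R, 0 < t < e -> pinterior s (p.1, p.2 - t) /\ ~ region s (p.1, p.2 + t).
Definition S_edge (s : seq pt) (i : nat) : Prop :=
  horizontal (vtx s i) (vtx s i.+1) /\
  forall p, oseg (vtx s i) (vtx s i.+1) p -> exists2 e : R, 0 < e &
    forall t : R, 0 < t < e -> pinterior s (p.1, p.2 + t) /\ ~ region s (p.1, p.2 - t).
Definition E_edge (s : seq pt) (i : nat) : Prop :=
  vertical (vtx s i) (vtx s i.+1) /\
  forall p, oseg (vtx s i) (vtx s i.+1) p -> exists2 e : R, 0 < e &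
    forall t : R, 0 < t < e -> pinterior s (p.1 - t, p.2) /\ ~ region s (p.1 + t, p.2).
Definition W_edge (s : seq pt) (i : nat) : Prop :=
  vertical (vtx s i) (vtx s i.+1) /\
  forall p, oseg (vtx s i) (vtx s i.+1) p -> exists2 e : R, 0 < e &
    forall t : R, 0 < t < e -> pinterior s (p.1 + t, p.2) /\ ~ region s (p.1 - t, p.2).

(* vertex i is incident to edges i-1 (= i + n - 1 mod n) and i *)
Definition incident_edge (s : seq pt) (i k : nat) : Prop :=
  k = i \/ k = ((i + size s).-1 %% size s)%N.

(* reflex vertex: interior angle 270 degrees, i.e. near the vertex exactly
   three of the four open quadrants lie in the interior of P *)
Definition reflex (s : seq pt) (i : nat) : Prop :=
  exists2 e : R, 0 < e & forall t : R, 0 < t < e ->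
    let w := vtx s i in
    count (fun p => `[< pinterior s p >])
      [:: (w.1 + t, w.2 + t); (w.1 - t, w.2 + t);
          (w.1 - t, w.2 - t); (w.1 + t, w.2 - t)] = 3%N.

Definition NE_reflex (s : seq pt) (i : nat) : Prop :=
  (i < size s)%N /\ reflex s i /\
  (exists k, incident_edge s i k /\ N_edge s k) /\
  (exists k, incident_edge s i k /\ E_edge s k).
Definition NW_reflex (s : seq pt) (i : nat) : Prop :=
  (i < size s)%N /\ reflex s i /\
  (exists k, incident_edge s i k /\ N_edge s k) /\
  (exists k, incident_edge s i k /\ W_edge s k).
Definition SE_reflex (s : seq pt) (i : nat) : Prop :=
  (i < size s)%N /\ reflex s i /\
  (exists k, incident_edge s i k /\ S_edge s k) /\
  (exists k, incident_edge s i k /\ E_edge s k).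
Definition SW_reflex (s : seq pt) (i : nat) : Prop :=
  (i < size s)%N /\ reflex s i /\
  (exists k, incident_edge s i k /\ S_edge s k) /\
  (exists k, incident_edge s i k /\ W_edge s k).

Definition line_at (beta : R) (a : pt) : set pt :=
  [set p | exists r : R, p = (a.1 + r * cos beta, a.2 + r * sin beta)].

Definition beta_convex (beta : R) (C : set pt) : Prop :=
  forall a : pt, connected (C `&` line_at beta a).

(* p and q see each other w.r.t. {0,90} rotated by theta, inside P *)
Definition sees (theta : R) (P : set pt) (p q : pt) : Prop :=
  exists g : R -> pt,
    {within `[0, 1], continuous g} /\ g 0 = p /\ g 1 = q /\
    g @` `[0, 1] `<=` P /\
    beta_convex theta (g @` `[0, 1]) /\
    beta_convex (theta + pi / 2) (g @` `[0, 1]).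

Definition kernel_theta (theta : R) (P : set pt) : set pt :=
  [set p | P p /\ forall q, P q -> sees theta P p q].

End Polygon.

From HB Require Import structures.
From mathcomp Require Import all_boot all_order all_algebra.
From mathcomp Require Import all_classical all_reals all_analysis.
From mathcomp Require Import ring lra zify.
Import Order.TTheory GRing.Theory Num.Theory.
Import numFieldNormedType.Exports.
Local Open Scope classical_set_scope.
Local Open Scope ring_scope.
Set Implicit Arguments. Unset Strict Implicit. Unset Printing Implicit Defensive.

(* Write m = (cos θ, sin θ) and m⊥ = (-sin θ, cos θ) for the two axis
   directions of the rotated frame.  A curve that is both θ- and
   (θ + 90°)-convex and joins q to a point p ≠ q of a closed quadrant
   q + ℝ≥0 d1 + ℝ≥0 d2 (d1, d2 ∈ {±m, ±m⊥} orthogonal) comes arbitrarily close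
   to q inside the punctured quadrant: convexity along d1 and d2 pulls points
   on the two boundary rays towards q, and connectedness does the rest.
   Near a point q in the relative interior of an edge, P is a half-plane; so
   if the punctured quadrant points to the outside there, p cannot see q.
   At an NE-reflex vertex u the vertical edge goes up from u.  A kernel point
   p with dot (p - u) m > 0 lies in such an outward quadrant at a point q of
   the vertical edge (if dot (p - u) m⊥ <= 0) or of the horizontal edge (if
   not), taken close enough to u.  Hence dot (p - u) m <= 0, and symmetrically
   dot (p - v) m >= 0 at the SW-reflex vertex v.  As v - u has nonnegative
   coordinates and m positive ones, u = v; but the vertical edge at v goes
   down.  The NW/SE case is the same with m⊥ in place of m. *)

Section PlaneGeometry.
Variable R : realType.
Notation pt := (R * R)%type.
Implicit Types (p q w z d n : pt) (t : R).

Lemma exists_pos_lt (e1 e2 : R) : 0 < e1 -> 0 < e2 ->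
  exists2 t : R, 0 < t & t < e1 /\ t < e2.
Proof.
move=> e10 e20; exists (Num.min e1 e2 / 2); first by rewrite divr_gt0 // lt_min e10.
have m1 : Num.min e1 e2 <= e1 by rewrite ge_min lexx.
have m2 : Num.min e1 e2 <= e2 by rewrite ge_min lexx orbT.
have : 0 < Num.min e1 e2 by rewrite lt_min e10.
by split; lra.
Qed.

Lemma cos_sin_gt0 (th : R) : 0 < th < pi / 2 -> 0 < cos th /\ 0 < sin th.
Proof.
move=> /andP[th0 th1]; split; last by apply: sin_gt0_pihalf; rewrite th0.
apply: cos_gt0_pihalf; rewrite th1 andbT; apply: lt_trans th0.
by rewrite oppr_lt0 divr_gt0 ?pi_gt0.
Qed.

Lemma pt_ext (a b : pt) : a.1 = b.1 -> a.2 = b.2 -> a = b.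
Proof. by case: a b => ? ? [? ?] /= -> ->. Qed.

Lemma scale_ptE t d : t *: d = (t * d.1, t * d.2).
Proof. by case: d. Qed.

Lemma shift_ptE q t (a b : R) : q + t *: (a, b) = (q.1 + t * a, q.2 + t * b).
Proof. by case: q. Qed.

Lemma ball_ptE q e z : ball q e z <-> `|q.1 - z.1| < e /\ `|q.2 - z.2| < e.
Proof. by rewrite /ball /= /prod_ball /= -!ball_normE. Qed.

Definition dot (a b : pt) : R := a.1 * b.1 + a.2 * b.2.

Lemma dotC d d' : dot d d' = dot d' d.
Proof. by rewrite /dot mulrC (mulrC d.2). Qed.

Lemma dot0 d : dot 0 d = 0.
Proof. by rewrite /dot /= !mul0r addr0. Qed.

Lemma dotNl d d' : dot (- d) d' = - dot d d'.
Proof. by rewrite /dot /=; ring. Qed.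

Lemma dotNr d d' : dot d (- d') = - dot d d'.
Proof. by rewrite /dot /=; ring. Qed.

Lemma dot_gt0_neq p q d : 0 < dot (p - q) d -> p <> q.
Proof. by move=> h E; move: h; rewrite E subrr dot0 ltxx. Qed.

Lemma dot_shift q r d d' : dot (q + r *: d - q) d' = r * dot d d'.
Proof. by rewrite addrC addKr /dot scale_ptE /=; ring. Qed.

Lemma dot_squeeze_eq a b p m : m.1 != 0 -> m.2 != 0 ->
  0 <= (b.1 - a.1) * m.1 -> 0 <= (b.2 - a.2) * m.2 ->
  dot (p - a) m <= 0 -> 0 <= dot (p - b) m -> a = b.
Proof.
rewrite /dot /= => m1 m2 h1 h2 pa pb.
have /eqP : (b.1 - a.1) * m.1 = 0 by lra.
have /eqP : (b.2 - a.2) * m.2 = 0 by lra.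
rewrite !mulf_eq0 (negPf m1) (negPf m2) !orbF !subr_eq0 => /eqP e2 /eqP e1.
exact: pt_ext.
Qed.

Lemma unit_coord_le1 n : dot n n = 1 -> `|n.1| <= 1 /\ `|n.2| <= 1.
Proof. by rewrite /dot => n1; split; rewrite ler_norml; apply/andP; split; nra. Qed.

Lemma ball_unit_shift q n e t : dot n n = 1 -> 0 <= t < e -> ball q e (q + t *: n).
Proof.
move=> /unit_coord_le1 [n1 n2] /andP[t0 te]; rewrite ball_ptE scale_ptE /=.
by rewrite !opprD !addrA !subrr !sub0r !normrN !normrM (ger0_norm t0); split; nra.
Qed.

Lemma dot_continuous q d : continuous (fun z => dot (z - q) d).
Proof.
move=> z; rewrite /dot /=; apply: cvgD; apply: cvgMr_tmp; apply: cvgB; try exact: cvg_cst.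
- exact: cvg_fst.
- exact: cvg_snd.
Qed.

Lemma open_dot_gt0 q d : open [set z | 0 < dot (z - q) d].
Proof.
apply: (@open_comp _ _ (fun z => dot (z - q) d) [set x | 0 < x]); last exact: open_gt.
by move=> z _; apply: dot_continuous.
Qed.

Lemma closed_dot_ge0 q d : closed [set z | 0 <= dot (z - q) d].
Proof.
apply: (@preimage_closed _ _ (fun z => dot (z - q) d) [set x | 0 <= x]); last exact: closed_ge.
by move=> z _; apply: dot_continuous.
Qed.

Lemma near_dot_gt0 p w d : 0 < dot (p - w) d -> \forall q \near w, 0 < dot (p - q) d.
Proof.
have E q : dot (p - q) d = dot (q - p) (- d) by rewrite /dot /=; ring.
move=> h; have /(_ w) : open [set q | 0 < dot (q - p) (- d)] := @open_dot_gt0 p (- d).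
by rewrite /= -E => /(_ h); apply: filterS => q /=; rewrite E.
Qed.

Lemma near_avoid_closed (F : nat -> set pt) m q :
  (forall j, (j < m)%N -> closed (F j) /\ ~ F j q) ->
  \forall z \near q, forall j, (j < m)%N -> ~ F j z.
Proof.
elim: m => [|m IH] hF; first by apply: filterE => z j; rewrite ltn0.
have [cF nFq] := hF m (ltnSn m).
have : \forall z \near q, ~ F m z by apply: (closed_openC cF).
apply: filterS2 (IH (fun j hj => hF j (ltnW hj))) => z near_m hz j.
by rewrite ltnS leq_eqVlt => /orP[/eqP ->|/near_m].
Qed.

End PlaneGeometry.

Section StaircaseCurves.
Variable R : realType.
Notation pt := (R * R)%type.
Implicit Types (p q w z d n : pt) (t : R).

Definition dir (beta : R) : pt := (cos beta, sin beta).

Lemma dot_dir beta : dot (dir beta) (dir beta) = 1.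
Proof. by rewrite /dot /= -!expr2 cos2Dsin2. Qed.

Lemma dirDpihalf th : dir (th + pi / 2) = (- sin th, cos th).
Proof. by rewrite /dir cosDpihalf sinDpihalf. Qed.

Lemma beta_convex_ray beta (C : set pt) q t t' :
  beta_convex beta C -> C q -> C (q + t *: dir beta) ->
  (0 <= t' <= t) || (t <= t' <= 0) -> C (q + t' *: dir beta).
Proof.
move=> /(_ q) cC Cq Ct ht'.
pose phi z := dot (z - q) (dir beta).
have phi_ray r : phi (q + r *: dir beta) = r.
  rewrite /phi addrC addKr -[RHS]mulr1 -(dot_dir beta) /dot scale_ptE /=; ring.
have /connected_intervalP itv : connected (phi @` (C `&` line_at beta q)).
  apply: connected_continuous_connected => //.
  exact/continuous_subspaceT/dot_continuous.
have phi0 : (phi @` (C `&` line_at beta q)) 0.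
  exists q; last by rewrite /phi subrr /dot /= !mul0r addr0.
  by split=> //; exists 0; rewrite !mul0r !addr0 -surjective_pairing.
have phit : (phi @` (C `&` line_at beta q)) t.
  by exists (q + t *: dir beta); [split=> //; exists t | exact: phi_ray].
have [z [Cz [r zE]] <-] : (phi @` (C `&` line_at beta q)) t'.
  by case/orP: ht' => ht'; [apply: (itv 0 t) | apply: (itv t 0)].
have zE' : z = q + r *: dir beta by [].
by rewrite zE' phi_ray -zE'.
Qed.

Definition axis_dir th d : Prop := exists2 sg : R, (sg = 1 \/ sg = -1) &
  (d = sg *: dir th \/ d = sg *: dir (th + pi / 2)).

Lemma axis_dir_dir th : axis_dir th (dir th).
Proof. by exists 1; [left | left; rewrite scale1r]. Qed.

Lemma axis_dir_dirDpihalf th : axis_dir th (dir (th + pi / 2)).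
Proof. by exists 1; [left | right; rewrite scale1r]. Qed.

Lemma axis_dirN th d : axis_dir th d -> axis_dir th (- d).
Proof.
case=> sg hsg hd; exists (- sg); first by case: hsg => ->; [right|left; rewrite opprK].
by case: hd => ->; [left|right]; rewrite scaleNr.
Qed.

Lemma axis_dir_rot th d : axis_dir th d -> axis_dir th (- d.2, d.1).
Proof.
case=> sg hsg [->|->]; rewrite ?dirDpihalf !scale_ptE /=.
  by exists sg => //; right; rewrite dirDpihalf scale_ptE /=; congr pair; ring.
exists (- sg); first by case: hsg => ->; [right|left; rewrite opprK].
by left; rewrite scale_ptE /=; congr pair; ring.
Qed.

Lemma axis_dir_unit th d : axis_dir th d -> dot d d = 1.
Proof.
case=> sg hsg [->|->]; rewrite ?dirDpihalf /dot !scale_ptE /= -[RHS](cos2Dsin2 th);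
  by case: hsg => ->; ring.
Qed.

Lemma dir_frame th v :
  v = dot v (dir th) *: dir th + dot v (dir (th + pi / 2)) *: dir (th + pi / 2).
Proof.
have cs := cos2Dsin2 th; rewrite dirDpihalf /dot !scale_ptE /=; apply: pt_ext => /=.
- by rewrite -[LHS]mulr1 -cs; ring.
- by rewrite -[LHS]mulr1 -cs; ring.
Qed.

Lemma axis_frame th d1 d2 v : axis_dir th d1 -> axis_dir th d2 -> dot d1 d2 = 0 ->
  v = dot v d1 *: d1 + dot v d2 *: d2.
Proof.
case=> s1 hs1 e1 [s2 hs2 e2]; have sq1 : s1 * s1 = 1 by case: hs1 => ->; ring.
have sq2 : s2 * s2 = 1 by case: hs2 => ->; ring.
have dotZ s e : dot v (s *: e) *: (s *: e) = (s * s) *: (dot v e *: e).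
  by rewrite /dot !scale_ptE; apply: pt_ext => /=; ring.
have dotZZ s s' e e' : dot (s *: e) (s' *: e') = s * s' * dot e e'.
  by rewrite /dot !scale_ptE /=; ring.
case: e1 => ->; case: e2 => -> o; rewrite !dotZ sq1 sq2 !scale1r.
- by exfalso; move: o; rewrite dotZZ dot_dir mulr1 => o; nra.
- exact: dir_frame.
- by rewrite addrC; exact: dir_frame.
- by exfalso; move: o; rewrite dotZZ dot_dir mulr1 => o; nra.
Qed.

Lemma axis_frame_eq0 th d1 d2 v : axis_dir th d1 -> axis_dir th d2 -> dot d1 d2 = 0 ->
  dot v d1 = 0 -> dot v d2 = 0 -> v = 0.
Proof.
by move=> a1 a2 o12 h1 h2; rewrite (axis_frame v a1 a2 o12) h1 h2 !scale0r addr0.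
Qed.

Lemma staircase_ray th (C : set pt) q d r r' :
  beta_convex th C -> beta_convex (th + pi / 2) C -> axis_dir th d ->
  C q -> C (q + r *: d) -> 0 <= r' <= r -> C (q + r' *: d).
Proof.
move=> cv1 cv2 [sg hsg hd] Cq Cr /andP[r0 rr].
have sgr b : beta_convex b C -> C (q + r *: (sg *: dir b)) -> C (q + r' *: (sg *: dir b)).
  rewrite !scalerA => cvb Cb; apply: (beta_convex_ray cvb Cq Cb).
  by apply/orP; case: hsg => ->; [left|right]; apply/andP; split; lra.
by case: hd Cr => -> Cr; apply: sgr.
Qed.

Definition quadrant q d1 d2 : set pt :=
  [set z | 0 <= dot (z - q) d1 /\ 0 <= dot (z - q) d2].

Lemma quadrantC q d1 d2 : quadrant q d1 d2 = quadrant q d2 d1.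
Proof. by apply/seteqP; split=> z [h1 h2]. Qed.

Lemma quadrant_dot_gt0 th q d1 d2 n z : axis_dir th d1 -> axis_dir th d2 ->
  dot d1 d2 = 0 -> 0 < dot d1 n -> 0 < dot d2 n ->
  quadrant q d1 d2 z -> z <> q -> 0 < dot (z - q) n.
Proof.
move=> a1 a2 o12 n1 n2 [h1 h2] zq.
have -> : dot (z - q) n = dot (z - q) d1 * dot d1 n + dot (z - q) d2 * dot d2 n.
  by rewrite {1}(axis_frame (z - q) a1 a2 o12) /dot !scale_ptE /=; ring.
move: h1 h2; rewrite !le_eqVlt => /orP[/eqP h1|h1] /orP[/eqP h2|h2].
- by case: zq; apply/subr0_eq; apply: (axis_frame_eq0 a1 a2 o12).
- by rewrite -h1 mul0r add0r mulr_gt0.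
- by rewrite -h2 mul0r addr0 mulr_gt0.
- by rewrite addr_gt0 // mulr_gt0.
Qed.

Section StaircaseCorner.
Variables (th : R) (C : set pt) (q : pt).
Hypotheses (cv1 : beta_convex th C) (cv2 : beta_convex (th + pi / 2) C) (Cq : C q).

Lemma staircase_ray_near d r e : axis_dir th d -> C (q + r *: d) -> 0 < r -> 0 < e ->
  exists2 r', 0 < r' & C (q + r' *: d) /\ ball q e (q + r' *: d).
Proof.
move=> hd Cr r0 e0; have [r' r'0 [r'r r'e]] := exists_pos_lt r0 e0.
exists r' => //; split; first by apply: (staircase_ray cv1 cv2 hd Cq Cr); rewrite !ltW.
by apply: ball_unit_shift; [exact: axis_dir_unit hd | rewrite ltW].
Qed.

Lemma staircase_axis_corner d1 d2 z e : axis_dir th d1 -> axis_dir th d2 ->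
  dot d1 d2 = 0 -> C z -> 0 < dot (z - q) d1 -> dot (z - q) d2 = 0 -> 0 < e ->
  exists w, [/\ C w, ball q e w, quadrant q d1 d2 w & w <> q].
Proof.
move=> a1 a2 o12 Cz h1 h2 e0.
have zE : z = q + dot (z - q) d1 *: d1.
  by have := axis_frame (z - q) a1 a2 o12; rewrite h2 scale0r addr0 => <-; rewrite addrC subrK.
have Cz' : C (q + dot (z - q) d1 *: d1) by rewrite -zE.
have [r r0 [Cr br]] := staircase_ray_near a1 Cz' h1 e0.
have r_d1 : dot (q + r *: d1 - q) d1 = r by rewrite dot_shift (axis_dir_unit a1) mulr1.
exists (q + r *: d1); split => //; last by apply: (dot_gt0_neq (d := d1)); rewrite r_d1.
by rewrite /quadrant /= r_d1 dot_shift o12 mulr0 ltW.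
Qed.

Lemma staircase_corner p d1 d2 e : connected C ->
  axis_dir th d1 -> axis_dir th d2 -> dot d1 d2 = 0 ->
  C p -> p <> q -> quadrant q d1 d2 p -> 0 < e ->
  exists z, [/\ C z, ball q e z, quadrant q d1 d2 z & z <> q].
Proof.
move=> cC a1 a2 o12 Cp pq Qp e0; apply: contrapT => none.
have inner z : C z -> quadrant q d1 d2 z -> z <> q ->
    0 < dot (z - q) d1 /\ 0 < dot (z - q) d2.
  move=> Cz [+ +] zq; rewrite !le_eqVlt => /orP[/eqP h1|h1] /orP[/eqP h2|h2] //; exfalso.
  - by apply: zq; apply/subr0_eq; apply: (axis_frame_eq0 a1 a2 o12).
  - apply: none; rewrite quadrantC.
    by apply: (staircase_axis_corner a2 a1 _ Cz h2 (esym h1) e0); rewrite dotC.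
  - exact/none/(staircase_axis_corner a1 a2 o12 Cz h1 (esym h2) e0).
set O := [set z | 0 < dot (z - q) d1] `&` [set z | 0 < dot (z - q) d2].
have CO : C `&` O = C.
  apply: cC; first by exists p; split; last apply: inner.
    by exists O => //; apply: openI; apply: open_dot_gt0.
  exists (quadrant q d1 d2 `&` ~` ball q e).
    apply: closedI; last exact/open_closedC/ball_open.
    by apply: closedI; apply: closed_dot_ge0.
  apply/seteqP; split => z [Cz Qz]; split => //.
    case: Qz => /= h1 h2; split; first by split; apply: ltW.
    move=> bz; apply: none; exists z.
    by split=> //; [split; apply: ltW | exact: dot_gt0_neq h1].
  have zq : z <> q by move=> zq; case: Qz => _; apply; rewrite zq; apply: ballxx.
  by case: Qz => Qz _; apply: inner.
have : (C `&` O) q by rewrite CO.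
by case=> _ [] /=; rewrite subrr dot0 ltxx.
Qed.

End StaircaseCorner.

Lemma sees_connected th (P : set pt) p q : sees th P p q ->
  exists C : set pt, [/\ C `<=` P, C p, C q, connected C &
    beta_convex th C /\ beta_convex (th + pi / 2) C].
Proof.
case=> g [gc [g0 [g1 [gP cvg]]]]; exists (g @` `[0, 1]); split => //.
- by exists 0 => //=; rewrite in_itv /= lexx ler01.
- by exists 1 => //=; rewrite in_itv /= lexx ler01.
- apply: connected_continuous_connected => //.
  exact/connected_intervalP/interval_is_interval.
Qed.

Lemma quadrant_not_sees th (P : set pt) p q d1 d2 n e :
  axis_dir th d1 -> axis_dir th d2 -> dot d1 d2 = 0 ->
  0 < dot d1 n -> 0 < dot d2 n -> 0 < e ->
  (forall z, ball q e z -> 0 < dot (z - q) n -> ~ P z) ->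
  quadrant q d1 d2 p -> p <> q -> ~ sees th P p q.
Proof.
move=> a1 a2 o12 n1 n2 e0 ext Qp pq /sees_connected [C [CP Cp Cq cC [cv1 cv2]]].
have [z [Cz bz Qz zq]] := staircase_corner cv1 cv2 Cq cC a1 a2 o12 Cp pq Qp e0.
exact: ext bz (quadrant_dot_gt0 a1 a2 o12 n1 n2 Qz zq) (CP z Cz).
Qed.

End StaircaseCurves.

Section Segments.
Variable R : realType.
Notation pt := (R * R)%type.
Implicit Types (a b p q z : pt) (t : R).

Lemma segment_continuous a b : continuous (fun t : R => a + t *: (b - a)).
Proof. by move=> t; apply: cvgD; [exact: cvg_cst | apply: cvgZr_tmp; exact: cvg_id]. Qed.

Lemma segE a b : seg a b = (fun t => a + t *: (b - a)) @` `[0, 1].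
Proof.
apply/seteqP; split => p.
  by case=> t [ht ->]; exists t => //=; rewrite in_itv /=.
by case=> t; rewrite /= in_itv /= => ht <-; exists t.
Qed.

Lemma seg_connected a b : connected (seg a b).
Proof.
rewrite segE; apply: connected_continuous_connected.
  exact/connected_intervalP/interval_is_interval.
exact/continuous_subspaceT/segment_continuous.
Qed.

Lemma seg_closed a b : closed (seg a b).
Proof.
rewrite segE; apply: compact_closed; first exact: norm_hausdorff.
apply: continuous_compact; last exact: segment_compact.
exact/continuous_subspaceT/segment_continuous.
Qed.

Lemma seg_sym a b : seg a b = seg b a.
Proof.
apply/seteqP; split => p [t [/andP[t0 t1] ->]]; exists (1 - t);
  (split; first by apply/andP; split; lra); congr pair; ring.
Qed.

Lemma oseg_sym a b : oseg a b = oseg b a.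
Proof.
apply/seteqP; split => p [t [/andP[t0 t1] ->]]; exists (1 - t);
  (split; first by apply/andP; split; lra); congr pair; ring.
Qed.

Lemma oseg_sub_seg a b : oseg a b `<=` seg a b.
Proof. by move=> p [t [/andP[t0 t1] ->]]; exists t; rewrite !ltW. Qed.

Lemma seg_start a b : seg a b a.
Proof. by exists 0; rewrite lexx ler01 !mul0r !addr0 -surjective_pairing. Qed.

Lemma seg_end a b : seg a b b.
Proof. by exists 1; rewrite lexx ler01; split => //; apply: pt_ext => /=; ring. Qed.

Lemma oseg_neq a b q : a <> b -> oseg a b q -> q <> a /\ q <> b.
Proof.
move=> ab [t [/andP[t0 t1] ->]]; split=> E; apply: ab.
all: move: (congr1 fst E) (congr1 snd E) => /= e1 e2; apply: pt_ext; nra.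
Qed.

Lemma seg_dot a b z n : seg a b z ->
  exists2 t : R, 0 <= t <= 1 & dot (z - a) n = t * dot (b - a) n.
Proof.
case=> t [ht ->]; exists t => //.
by rewrite /dot /=; ring.
Qed.

Lemma oseg_near a b (P : set pt) : (\forall z \near a, P z) ->
  exists z, oseg a b z /\ P z.
Proof.
move=> Pa; have : a + t *: (b - a) @[t --> (0 : R)] --> a.
  by have := @segment_continuous a b 0; rewrite /continuous_at /= scale0r addr0.
move=> /(_ _ Pa) /nbhs_ballP [d d0 hd].
have [t t0 [td t1]] := exists_pos_lt d0 ltr01.
exists (a + t *: (b - a)); split; first by exists t; rewrite t0 t1.
by apply: hd; rewrite -ball_normE /= sub0r normrN gtr0_norm.
Qed.

Definition half_ball q e n : set pt := [set z | ball q e z /\ 0 < dot (z - q) n].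

Lemma half_ball_convex q e n a b : half_ball q e n a -> half_ball q e n b ->
  seg a b `<=` half_ball q e n.
Proof.
move=> [ba pa] [bb pb] z [t [/andP[t0 t1] ->]]; split.
  move: ba bb; rewrite -!ball_normE /ball_ /=.
  have -> : q - (a + t *: (b - a)) = (1 - t) *: (q - a) + t *: (q - b).
    by apply: pt_ext; rewrite !scale_ptE /=; ring.
  move=> ba bb; rewrite (le_lt_trans (ler_normD _ _)) // !normrZ.
  by rewrite (ger0_norm t0) ger0_norm ?subr_ge0 //; case: (ltrP 0 t) => ht; nra.
have -> : dot (a + t *: (b - a) - q) n = (1 - t) * dot (a - q) n + t * dot (b - q) n.
  by rewrite /dot scale_ptE /=; ring.
by case: (ltrP 0 t) => ht; nra.
Qed.

End Segments.

Section PolygonEdges.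
Variable R : realType.
Notation pt := (R * R)%type.
Variable s : seq pt.
Hypothesis hs : simple_orthogonal_polygon s.

Definition prev_index (i : nat) : nat := ((i + size s).-1 %% size s)%N.

Lemma size_polygon_gt0 : (0 < size s)%N.
Proof. by case: hs => -[n4 _] _; lia. Qed.

Lemma vtx_mod i : vtx s (i %% size s) = vtx s i.
Proof. by rewrite /vtx modn_mod. Qed.

Lemma vtx_prev_succ i : vtx s (prev_index i).+1 = vtx s i.
Proof.
rewrite /vtx /prev_index; congr nth.
rewrite -addn1 modnDml addn1 prednK ?modnDr //.
by rewrite addn_gt0 size_polygon_gt0 orbT.
Qed.

Lemma prev_index_lt i : (prev_index i < size s)%N.
Proof. by rewrite /prev_index ltn_pmod // size_polygon_gt0. Qed.

Lemma prev_index_succ j : (j < size s)%N -> prev_index (j.+1 %% size s) = j.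
Proof.
move=> hj; rewrite /prev_index; case: (ltnP j.+1 (size s)) => h.
  by rewrite (modn_small h) addSn /= modnDr modn_small.
have -> : j.+1 = size s by lia.
by rewrite modnn add0n modn_small; lia.
Qed.

Lemma edge_nondegenerate k : (k < size s)%N -> vtx s k <> vtx s k.+1.
Proof.
case: hs => -[_ ho] _ /ho [[h _]|[h _]] E; move: h;
  by rewrite /horizontal /vertical E; case.
Qed.

Lemma oseg_on_edge k j q : (k < size s)%N -> (j < size s)%N ->
  oseg (vtx s k) (vtx s k.+1) q -> edge s j q -> j = k.
Proof.
case: hs => _ sp hk hj oq ej; apply: contrapT => jk.
have [qa qb] := oseg_neq (edge_nondegenerate hk) oq.
have ek : edge s k q := oseg_sub_seg oq.
have meet A B : A q -> B q -> (A `&` B) q by [].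
case: (eqVneq j (k.+1 %% size s)%N) => [jE|jn].
  by apply: qb; move: (meet _ _ ek ej); rewrite (sp k j hk hj (nesym jk)).1.
case: (eqVneq k (j.+1 %% size s)%N) => [kE|kn].
  by apply: qa; move: (meet _ _ ej ek); rewrite (sp j k hj hk jk).1 // -vtx_mod -kE.
by move: (meet _ _ ek ej); rewrite (sp k j hk hj (nesym jk)).2 //; apply/eqP.
Qed.

Lemma vertex_on_edge i j : (i < size s)%N -> (j < size s)%N ->
  edge s j (vtx s i) -> j = i \/ j = prev_index i.
Proof.
case: hs => _ sp hi hj ej; apply: contrapT => /not_orP[ji jp].
have ei : edge s i (vtx s i) := seg_start _ _.
have meet A B : A (vtx s i) -> B (vtx s i) -> (A `&` B) (vtx s i) by [].
case: (eqVneq j (i.+1 %% size s)%N) => [jE|jn].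
  apply: (edge_nondegenerate hi).
  by move: (meet _ _ ei ej); rewrite (sp i j hi hj (nesym ji)).1.
case: (eqVneq i (j.+1 %% size s)%N) => [iE|iN].
  by apply: jp; rewrite iE prev_index_succ.
by move: (meet _ _ ei ej); rewrite (sp i j hi hj (nesym ji)).2 //; apply/eqP.
Qed.

End PolygonEdges.

Section PolygonExterior.
Variable R : realType.
Notation pt := (R * R)%type.
Variable s : seq pt.
Hypothesis hs : simple_orthogonal_polygon s.
Implicit Types (q z n : pt) (e t : R).

Lemma not_region_connected (S : set pt) z0 z : S `<=` ~` boundary s -> connected S ->
  S z0 -> S z -> ~ region s z0 -> ~ region s z.
Proof.
move=> Sb cS Sz0 Sz nr0 [bz|[_ bd]]; first exact: Sb Sz bz.
apply: nr0; right; split; first exact: Sb.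
have cc : connected_component (~` boundary s) z0 z by exists S.
by rewrite (same_connected_component cc).
Qed.

Lemma half_ball_off_boundary q n (K : pred nat) :
  (forall j, (j < size s)%N -> ~~ K j -> ~ edge s j q) ->
  (forall j z, K j -> edge s j z -> dot (z - q) n <= 0) ->
  exists2 e, 0 < e & forall z, half_ball q e n z -> ~ boundary s z.
Proof.
move=> far on_side.
have /nbhs_ballP [e e0 he] : \forall z \near q, forall j, (j < size s)%N ->
    ~ (if K j then set0 else edge s j) z.
  apply: near_avoid_closed => j hj; case: ifP => Kj.
    by split=> //; exact: closed0.
  by split; [exact: seg_closed | apply: far => //; rewrite Kj].
exists e => // z [bz pz] [j [hj ej]].
case Kj: (K j); first by have := on_side j z Kj ej; lra.
by have := he z bz j hj; rewrite Kj.
Qed.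

Lemma half_ball_outside q e n z0 : (forall z, half_ball q e n z -> ~ boundary s z) ->
  half_ball q e n z0 -> ~ region s z0 -> forall z, half_ball q e n z -> ~ region s z.
Proof.
move=> off h0 nr0 z hz; apply: (not_region_connected _ (@seg_connected _ z0 z) _ _ nr0).
- by move=> y /(half_ball_convex h0 hz) /off.
- exact: seg_start.
- exact: seg_end.
Qed.

Lemma edge_in_region k z : (k < size s)%N -> edge s k z -> region s z.
Proof. by move=> hk ekz; left; exists k. Qed.

Definition exterior_side k n := forall p, oseg (vtx s k) (vtx s k.+1) p ->
  exists2 e, 0 < e & forall t, 0 < t < e -> ~ region s (p + t *: n).

Lemma edge_half_ball_outside k q n : (k < size s)%N ->
  oseg (vtx s k) (vtx s k.+1) q -> (forall z, edge s k z -> dot (z - q) n = 0) ->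
  dot n n = 1 -> exterior_side k n ->
  exists2 e, 0 < e & forall z, half_ball q e n z -> ~ region s z.
Proof.
move=> hk oq perp n1 ext.
have far j : (j < size s)%N -> j != k -> ~ edge s j q.
  by move=> hj /eqP jk ej; apply/jk/(oseg_on_edge hs hk hj oq ej).
have on_side j z : j == k -> edge s j z -> dot (z - q) n <= 0.
  by move=> /eqP -> /perp ->.
have [e e0 off] := half_ball_off_boundary (K := pred1 k) far on_side.
have [e' e'0 he'] := ext q oq; have [t t0 [te te']] := exists_pos_lt e0 e'0.
exists e => //; apply: (half_ball_outside off _ (he' t _)); last by rewrite t0.
split; first by apply: ball_unit_shift; rewrite ?ltW.
by rewrite dot_shift n1 mulr1.
Qed.

Lemma vertex_half_ball_outside i n : (i < size s)%N ->
  (forall z, edge s i z -> dot (z - vtx s i) n <= 0) ->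
  (forall z, edge s (prev_index s i) z -> dot (z - vtx s i) n <= 0) ->
  (forall e, 0 < e -> exists z, half_ball (vtx s i) e n z /\ ~ region s z) ->
  exists2 e, 0 < e & forall z, half_ball (vtx s i) e n z -> ~ region s z.
Proof.
move=> hi below below' ext.
pose K := [pred j | (j == i) || (j == prev_index s i)].
have far j : (j < size s)%N -> ~~ K j -> ~ edge s j (vtx s i).
  rewrite negb_or => hj /andP[/eqP ji /eqP jp] ej.
  by case: (vertex_on_edge hs hi hj ej).
have on_side j z : K j -> edge s j z -> dot (z - vtx s i) n <= 0.
  by case/orP => /eqP ->; [exact: below | exact: below'].
have [e e0 off] := half_ball_off_boundary far on_side.
have [z0 [h0 nr0]] := ext e e0.
by exists e => //; apply: half_ball_outside off h0 nr0.
Qed.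

End PolygonExterior.

Section Corners.
Variable R : realType.
Notation pt := (R * R)%type.
Implicit Types (s : seq pt) (a b z n : pt).

Definition edge_ends s k a b :=
  (vtx s k, vtx s k.+1) = (a, b) \/ (vtx s k, vtx s k.+1) = (b, a).

Lemma edge_endsE s k a b : edge_ends s k a b -> edge s k = seg a b.
Proof. by rewrite /edge => -[] [-> ->] //; rewrite seg_sym. Qed.

Lemma edge_ends_oseg s k a b : edge_ends s k a b -> oseg (vtx s k) (vtx s k.+1) = oseg a b.
Proof. by case=> -[-> ->] //; rewrite oseg_sym. Qed.

Lemma edge_ends_horizontal s k a b : edge_ends s k a b ->
  horizontal (vtx s k) (vtx s k.+1) -> horizontal a b.
Proof. by case=> -[-> ->] // [h1 h2]; split=> // /esym. Qed.

Lemma edge_ends_vertical s k a b : edge_ends s k a b ->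
  vertical (vtx s k) (vtx s k.+1) -> vertical a b.
Proof. by case=> -[-> ->] // [h1 h2]; split=> // /esym. Qed.

Lemma incident_edge_ends s i k : simple_orthogonal_polygon s -> (i < size s)%N ->
  incident_edge s i k -> (k < size s)%N /\ exists c, edge_ends s k (vtx s i) c.
Proof.
move=> hs hi [->|->]; first by split=> //; exists (vtx s i.+1); left.
split; first exact: (prev_index_lt hs).
by exists (vtx s (prev_index s i)); right; rewrite (vtx_prev_succ hs).
Qed.

(* [(0, tau)] and [(rho, 0)] are the outward normals of the horizontal and the
   vertical edge at vertex [i]. *)
Definition reflex_corner s i (tau rho : R) := [/\ (i < size s)%N, reflex s i,
  exists2 k, incident_edge s i k &
    horizontal (vtx s k) (vtx s k.+1) /\ exterior_side s k (0, tau)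
  & exists2 k, incident_edge s i k &
    vertical (vtx s k) (vtx s k.+1) /\ exterior_side s k (rho, 0)].

Lemma N_edge_exterior s k : N_edge s k ->
  horizontal (vtx s k) (vtx s k.+1) /\ exterior_side s k (0, 1).
Proof.
case=> hk ext; split=> // p /ext [e e0 he]; exists e => // t /he [_].
by rewrite shift_ptE mulr0 addr0 mulr1.
Qed.

Lemma S_edge_exterior s k : S_edge s k ->
  horizontal (vtx s k) (vtx s k.+1) /\ exterior_side s k (0, -1).
Proof.
case=> hk ext; split=> // p /ext [e e0 he]; exists e => // t /he [_].
by rewrite shift_ptE mulr0 addr0 mulrN1.
Qed.

Lemma E_edge_exterior s k : E_edge s k ->
  vertical (vtx s k) (vtx s k.+1) /\ exterior_side s k (1, 0).
Proof.
case=> hk ext; split=> // p /ext [e e0 he]; exists e => // t /he [_].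
by rewrite shift_ptE mulr0 addr0 mulr1.
Qed.

Lemma W_edge_exterior s k : W_edge s k ->
  vertical (vtx s k) (vtx s k.+1) /\ exterior_side s k (-1, 0).
Proof.
case=> hk ext; split=> // p /ext [e e0 he]; exists e => // t /he [_].
by rewrite shift_ptE mulr0 addr0 mulrN1.
Qed.

Lemma NE_reflex_corner s i : NE_reflex s i -> reflex_corner s i 1 1.
Proof.
case=> hi [r [[k [ik /N_edge_exterior hk]] [k' [ik' /E_edge_exterior hk']]]].
by split=> //; [exists k | exists k'].
Qed.

Lemma NW_reflex_corner s i : NW_reflex s i -> reflex_corner s i 1 (-1).
Proof.
case=> hi [r [[k [ik /N_edge_exterior hk]] [k' [ik' /W_edge_exterior hk']]]].
by split=> //; [exists k | exists k'].
Qed.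

Lemma SE_reflex_corner s i : SE_reflex s i -> reflex_corner s i (-1) 1.
Proof.
case=> hi [r [[k [ik /S_edge_exterior hk]] [k' [ik' /E_edge_exterior hk']]]].
by split=> //; [exists k | exists k'].
Qed.

Lemma SW_reflex_corner s i : SW_reflex s i -> reflex_corner s i (-1) (-1).
Proof.
case=> hi [r [[k [ik /S_edge_exterior hk]] [k' [ik' /W_edge_exterior hk']]]].
by split=> //; [exists k | exists k'].
Qed.

Lemma reflex_not_half_exterior s i (tau e : R) : reflex s i -> (tau = 1 \/ tau = -1) ->
  0 < e -> ~ (forall z, half_ball (vtx s i) e (0, tau) z -> ~ region s z).
Proof.
move=> [er er0 hr] htau e0 ext; set w := vtx s i.
(* two of the four diagonal test points of [reflex] lie in the half ball *)
have [t t0 [ter te]] := exists_pos_lt er0 e0.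
have out (a b : R) : `|a| < e -> `|b| < e -> 0 < b * tau -> ~ pinterior s (w.1 + a, w.2 + b).
  move=> ha hb hp pz; apply: (ext (w.1 + a, w.2 + b)); last by right.
  split; last by rewrite /dot /=; lra.
  by rewrite ball_ptE /= !opprD !addrA !subrr !sub0r !normrN.
have tn : `|t| < e by rewrite gtr0_norm.
have tn' : `|- t| < e by rewrite normrN gtr0_norm.
have := hr t; rewrite t0 ter => /(_ isT) /=.
case: htau => htau; rewrite htau in out.
- rewrite (asboolF (out t t tn tn _)) ?(asboolF (out (- t) t tn' tn _)) ?mulr1 //.
  by case: (`[< _ >]); case: (`[< _ >]).
- rewrite (asboolF (out (- t) (- t) tn' tn' _)) ?(asboolF (out t (- t) tn tn' _));
    rewrite ?mulrN1 ?opprK //.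
  by case: (`[< _ >]); case: (`[< _ >]).
Qed.

Section ReflexCorner.
Variables (s : seq pt) (i kh kv : nat) (oh ov : pt) (tau rho : R).
Hypotheses (hs : simple_orthogonal_polygon s) (hi : (i < size s)%N).
Hypotheses (htau : tau = 1 \/ tau = -1) (hrho : rho = 1 \/ rho = -1).
Hypotheses (khs : (kh < size s)%N) (ikh : incident_edge s i kh)
  (ekh : edge_ends s kh (vtx s i) oh) (hor : horizontal (vtx s i) oh)
  (exth : exterior_side s kh (0, tau)).
Hypotheses (kvs : (kv < size s)%N) (ikv : incident_edge s i kv)
  (ekv : edge_ends s kv (vtx s i) ov) (ver : vertical (vtx s i) ov)
  (extv : exterior_side s kv (rho, 0)).
Local Notation w := (vtx s i).

Lemma tau_sq : tau * tau = 1. Proof. by case: htau => ->; ring. Qed.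
Lemma rho_sq : rho * rho = 1. Proof. by case: hrho => ->; ring. Qed.

Lemma corner_edges j : j = i \/ j = prev_index s i -> j = kh \/ j = kv.
Proof.
have khv : kh <> kv.
  move=> E; have : seg w ov oh.
    by rewrite -(edge_endsE ekv) -E (edge_endsE ekh); exact: seg_end.
  case/(seg_dot (1, 0)) => t _; rewrite /dot /= -ver.1 subrr => h.
  by apply: hor.2; lra.
rewrite /prev_index => hj; case: ikh => eh; case: ikv => ev; case: hj => ej; lia.
Qed.

Lemma corner_exterior_points e : 0 < e ->
  exists z, half_ball w e (0, tau) z /\ ~ region s z.
Proof.
move=> e0; have e20 : 0 < e / 2 by rewrite divr_gt0.
have [q [oq bq]] := oseg_near oh (near_ball w _ e20).
have [e' e'0 he'] :
    exists2 e', 0 < e' & forall t, 0 < t < e' -> ~ region s (q + t *: (0, tau)).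
  by apply: exth; rewrite (edge_ends_oseg ekh).
have [t t0 [te' te]] := exists_pos_lt e'0 e20.
have n1 : dot (0, tau) (0, tau) = 1 by rewrite /dot /= mul0r add0r tau_sq.
exists (q + t *: (0, tau)); split; last by apply: he'; rewrite t0.
split.
  rewrite [e]splitr; apply: ball_triangle bq _.
  by apply: ball_unit_shift; rewrite // ltW.
have [t' _ qw] := seg_dot (0, tau) (oseg_sub_seg oq).
have -> : dot (q + t *: (0, tau) - w) (0, tau) = dot (q - w) (0, tau) + t * (tau * tau).
  by rewrite /dot scale_ptE /=; ring.
by rewrite qw /dot /= -hor.1 subrr mulr0 mul0r add0r mulr0 add0r tau_sq mulr1.
Qed.

Lemma corner_turns_outward : reflex s i -> 0 < tau * (ov.2 - w.2).
Proof.
move=> hr; rewrite ltNge; apply/negP => le0.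
have below j z : j = i \/ j = prev_index s i -> edge s j z -> dot (z - w) (0, tau) <= 0.
  move=> /corner_edges [->|->]; [rewrite (edge_endsE ekh) | rewrite (edge_endsE ekv)];
    case/(seg_dot (0, tau)) => t /andP[t0 t1] ->; rewrite /dot /= mulr0 add0r.
    by rewrite -hor.1 subrr mul0r mulr0.
  by nra.
have [e e0 ext] := vertex_half_ball_outside hs hi (below i ^~ (or_introl erefl))
  (below _ ^~ (or_intror erefl)) corner_exterior_points.
exact: reflex_not_half_exterior hr htau e0 ext.
Qed.

Lemma corner_vertical_edge k z : reflex s i -> (k < size s)%N ->
  vertical (vtx s k) (vtx s k.+1) -> edge s k w -> edge s k z -> 0 <= tau * (z.2 - w.2).
Proof.
move=> hr hk vk /(vertex_on_edge hs hi hk) /corner_edges [E|E]; rewrite E in vk *.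
  by exfalso; case: ekh vk => -[-> ->] [h _]; apply: hor.2; rewrite h.
rewrite (edge_endsE ekv) => /(seg_dot (0, tau)) [t /andP[t0 _]].
have := corner_turns_outward hr; rewrite /dot /= !mulr0 !add0r; nra.
Qed.

Section KernelBound.
Variables (th : R) (m p : pt).
Hypotheses (hr : reflex s i) (am : axis_dir th m).
Hypotheses (m_tau : 0 < tau * m.2) (m_rho : 0 < rho * m.1).
Hypotheses (kp : kernel_theta th (region s) p) (pm : 0 < dot (p - w) m).
(* The axis direction orthogonal to [m] that leaves the polygon across the
   horizontal edge and enters it across the vertical one. *)
Local Notation m' := ((rho * tau) *: (- m.2, m.1)).

Lemma axis_dir_cross : axis_dir th m'.
Proof.
have := axis_dir_rot am.
by case: hrho htau => -> [] ->; rewrite ?mulr1 ?mulrN1 ?opprK ?scale1r ?scaleN1r //;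
  exact: axis_dirN.
Qed.

Lemma dot_cross : dot m m' = 0.
Proof. by rewrite /dot scale_ptE /=; ring. Qed.

Lemma dot_cross_tau : dot m' (0, tau) = rho * m.1.
Proof. by rewrite /dot scale_ptE /= -[RHS]mulr1 -tau_sq; ring. Qed.

Lemma dot_cross_rho : dot m' (rho, 0) = - (tau * m.2).
Proof. by rewrite /dot scale_ptE /= -[RHS]mulr1 -rho_sq; ring. Qed.

Lemma kernel_not_past_vertical_edge : dot (p - w) m' <= 0 -> False.
Proof.
move=> pm'; have [q [oq pq]] := oseg_near ov (near_dot_gt0 pm).
have [t /andP[t0 _] qt] : exists2 t, 0 < t < 1 & q = w + t *: (ov - w).
  by case: oq => t [ht ->]; exists t.
have oq' : oseg (vtx s kv) (vtx s kv.+1) q by rewrite (edge_ends_oseg ekv).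
have perp z : edge s kv z -> dot (z - q) (rho, 0) = 0.
  rewrite (edge_endsE ekv) qt => -[t' [_ ->]].
  by rewrite /dot scale_ptE /= -ver.1; ring.
have n1 : dot (rho, 0) (rho, 0) = 1 by rewrite /dot /= mulr0 addr0 rho_sq.
have [e e0 he] := edge_half_ball_outside hs kvs oq' perp n1 extv.
apply: (quadrant_not_sees (d1 := m) (d2 := - m') am (axis_dirN axis_dir_cross) _ _ _ e0
  (fun z bz pz => he z (conj bz pz)) _ (dot_gt0_neq pq)).
- by rewrite dotNr dot_cross oppr0.
- by rewrite /dot /= mulr0 addr0 mulrC.
- by rewrite dotNl dot_cross_rho opprK.
- split; first exact: ltW.
  have -> : dot (p - q) (- m') = t * dot (ov - w) m' - dot (p - w) m'.
    by rewrite qt /dot scale_ptE /=; ring.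
  have out := corner_turns_outward hr.
  have : 0 < dot (ov - w) m'.
    have := mulr_gt0 out m_rho.
    by rewrite scale_ptE /dot /= -ver.1 subrr mul0r add0r; nra.
  by nra.
- exact: (kp.2 q (edge_in_region kvs (oseg_sub_seg oq'))).
Qed.

Lemma kernel_not_past_horizontal_edge : 0 < dot (p - w) m' -> False.
Proof.
move=> pm'; have near_w : \forall q \near w, 0 < dot (p - q) m /\ 0 < dot (p - q) m'.
  by apply: filterS2 (near_dot_gt0 pm) (near_dot_gt0 pm') => q.
have [q [oq [pq pq']]] := oseg_near oh near_w.
have [t _ qt] : exists2 t, 0 < t < 1 & q = w + t *: (oh - w).
  by case: oq => t [ht ->]; exists t.
have oq' : oseg (vtx s kh) (vtx s kh.+1) q by rewrite (edge_ends_oseg ekh).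
have perp z : edge s kh z -> dot (z - q) (0, tau) = 0.
  rewrite (edge_endsE ekh) qt => -[t' [_ ->]].
  by rewrite /dot scale_ptE /= -hor.1; ring.
have n1 : dot (0, tau) (0, tau) = 1 by rewrite /dot /= mul0r add0r tau_sq.
have [e e0 he] := edge_half_ball_outside hs khs oq' perp n1 exth.
apply: (quadrant_not_sees am axis_dir_cross dot_cross _ _ e0
  (fun z bz pz => he z (conj bz pz)) _ (dot_gt0_neq pq)).
- by rewrite /dot /= mulr0 add0r mulrC.
- by rewrite dot_cross_tau.
- by split; apply: ltW.
- exact: (kp.2 q (edge_in_region khs (oseg_sub_seg oq'))).
Qed.

End KernelBound.

Lemma corner_kernel_bound th m p : reflex s i -> axis_dir th m ->
  0 < tau * m.2 -> 0 < rho * m.1 -> kernel_theta th (region s) p -> dot (p - w) m <= 0.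
Proof.
move=> hr am m_tau m_rho kp; rewrite leNgt; apply/negP => pm.
case: (lerP (dot (p - w) ((rho * tau) *: (- m.2, m.1))) 0) => h.
- exact: (kernel_not_past_vertical_edge hr am m_tau m_rho kp pm h).
- exact: (kernel_not_past_horizontal_edge am m_tau m_rho kp pm h).
Qed.

End ReflexCorner.

Lemma reflex_corner_edges s i tau rho : simple_orthogonal_polygon s ->
  reflex_corner s i tau rho -> exists kh oh kv ov,
  [/\ (kh < size s)%N, incident_edge s i kh, edge_ends s kh (vtx s i) oh,
      horizontal (vtx s i) oh & exterior_side s kh (0, tau)] /\
  [/\ (kv < size s)%N, incident_edge s i kv, edge_ends s kv (vtx s i) ov,
      vertical (vtx s i) ov & exterior_side s kv (rho, 0)].
Proof.
move=> hs [hi _ [kh ikh [hh exth]] [kv ikv [vv extv]]].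
have [khs [oh ekh]] := incident_edge_ends hs hi ikh.
have [kvs [ov ekv]] := incident_edge_ends hs hi ikv.
exists kh, oh, kv, ov; split; split=> //.
- exact: edge_ends_horizontal ekh hh.
- exact: edge_ends_vertical ekv vv.
Qed.

Lemma reflex_corner_kernel s i tau rho th m p : simple_orthogonal_polygon s ->
  reflex_corner s i tau rho -> (tau = 1 \/ tau = -1) -> (rho = 1 \/ rho = -1) ->
  axis_dir th m -> 0 < tau * m.2 -> 0 < rho * m.1 ->
  kernel_theta th (region s) p -> dot (p - vtx s i) m <= 0.
Proof.
move=> hs c htau hrho; have [hi hr _ _] := c.
have [kh [oh [kv [ov [[khs ikh ekh hh exth] [kvs ikv ekv vv extv]]]]]] :=
  reflex_corner_edges hs c.
exact: (corner_kernel_bound hs hi htau hrho khs ikh ekh hh exth kvs ikv ekv vv extv).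
Qed.

Lemma reflex_corner_vertical_edge s i tau rho k z : simple_orthogonal_polygon s ->
  reflex_corner s i tau rho -> (tau = 1 \/ tau = -1) ->
  (k < size s)%N -> vertical (vtx s k) (vtx s k.+1) -> edge s k (vtx s i) ->
  edge s k z -> 0 <= tau * (z.2 - (vtx s i).2).
Proof.
move=> hs c htau; have [hi hr _ _] := c.
have [kh [oh [kv [ov [[khs ikh ekh hh exth] [kvs ikv ekv vv _]]]]]] :=
  reflex_corner_edges hs c.
exact: (corner_vertical_edge hs hi htau khs ikh ekh hh exth kvs ikv ekv vv hr).
Qed.

Lemma reflex_corners_apart s u v rho rho' : simple_orthogonal_polygon s ->
  reflex_corner s u 1 rho -> reflex_corner s v (-1) rho' -> vtx s u <> vtx s v.
Proof.
move=> hs cu cv uv; have [hu _ _ [k ik [vk _]]] := cu.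
have [hk [b ekb]] := incident_edge_ends hs hu ik.
have eku : edge s k (vtx s u) by rewrite (edge_endsE ekb); exact: seg_start.
have ekv : edge s k (vtx s v) by rewrite -uv.
have flat z : edge s k z -> z.2 = (vtx s u).2.
  move=> ez; have := reflex_corner_vertical_edge hs cu (or_introl erefl) hk vk eku ez.
  have := reflex_corner_vertical_edge hs cv (or_intror erefl) hk vk ekv ez.
  by rewrite -uv; lra.
by case: vk => _; rewrite (flat _ (seg_start _ _)) (flat _ (seg_end _ _)).
Qed.

Lemma opposite_corners_kernel_empty s u v rho rho' th m : simple_orthogonal_polygon s ->
  reflex_corner s u 1 rho -> reflex_corner s v (-1) rho' ->
  (rho = 1 \/ rho = -1) -> rho' = - rho -> axis_dir th m -> 0 < m.2 -> 0 < rho * m.1 ->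
  0 <= ((vtx s v).1 - (vtx s u).1) * m.1 -> 0 <= ((vtx s v).2 - (vtx s u).2) * m.2 ->
  kernel_theta th (region s) = set0.
Proof.
move=> hs cu cv hrho rho'E am m2 m1 hx hy; apply/seteqP; split=> // p kp.
have rho'1 : rho' = 1 \/ rho' = -1.
  by rewrite rho'E; case: hrho => ->; rewrite ?opprK; [right|left].
apply: (reflex_corners_apart hs cu cv); apply: (dot_squeeze_eq (p := p) _ _ hx hy).
- by apply: contraTneq m1 => ->; rewrite mulr0 ltxx.
- by rewrite gt_eqF.
- by apply: (reflex_corner_kernel hs cu _ hrho am _ m1 kp); [left | rewrite mul1r].
- rewrite -oppr_le0 -dotNr; apply: (reflex_corner_kernel hs cv _ rho'1 (axis_dirN am) _ _ kp).
  + by right.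
  + by rewrite mulN1r opprK.
  + by rewrite rho'E /= mulrNN.
Qed.

End Corners.

Unset Implicit Arguments.

Theorem lemma4 (R : realType) (s : seq (R * R)) :
  simple_orthogonal_polygon s ->
  (forall u v : nat, NE_reflex s u -> SW_reflex s v ->
     (vtx s u).1 <= (vtx s v).1 -> (vtx s u).2 <= (vtx s v).2 ->
     forall theta : R, 0 < theta < pi / 2 ->
       kernel_theta theta (region s) = set0) /\
  (forall u' v' : nat, NW_reflex s u' -> SE_reflex s v' ->
     (vtx s v').1 <= (vtx s u').1 -> (vtx s u').2 <= (vtx s v').2 ->
     forall theta : R, 0 < theta < pi / 2 ->
       kernel_theta theta (region s) = set0).
Proof.
move=> hs; split=> [u v /NE_reflex_corner cu /SW_reflex_corner cv |
                    u v /NW_reflex_corner cu /SE_reflex_corner cv] hx hy th.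
all: move=> /cos_sin_gt0 [c0 s0].
- have am := axis_dir_dir th.
  apply: (opposite_corners_kernel_empty hs cu cv (or_introl erefl) erefl am) => /=.
  + exact: s0.
  + by rewrite mul1r.
  + by nra.
  + by nra.
- have am := axis_dir_dirDpihalf th; rewrite dirDpihalf in am.
  apply: (opposite_corners_kernel_empty hs cu cv (or_intror erefl) _ am) => /=.
  + by rewrite opprK.
  + exact: c0.
  + by rewrite mulN1r opprK.
  + by nra.
  + by nra.
Qed.
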